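(* Let $u,v\in\mathbb{Z}_2^n$ with $d=d_{\mathcal H}(u,v)\le2\varepsilon$ and $\varepsilon/n<1/2$. Then $$\mathcal{I}^\varepsilon_d\le 2^{n\left(h\left(\frac{\varepsilon-\lceil d/2\rceil}{n}\right)-1\right)+d}\le 2^{n(h(\varepsilon/n)-1)+d}\left(\frac{\varepsilon/n}{1-\varepsilon/n}\right)^{\lceil d/2\rceil}.$$
   Context: $d_{\mathcal H}$ is the Hamming distance, $B_\varepsilon(t)=\{y:d_{\mathcal H}(t,y)\le\varepsilon\}$, and $\mathcal{I}^\varepsilon_d=|B_\varepsilon(u)\cap B_\varepsilon(v)|/2^n=\frac{1}{2^n}\sum_{k=\max(0,d-\varepsilon)}^{\min(\varepsilon,d)}\sum_{i=0}^{\min(\varepsilon-k,\varepsilon-d+k)}\binom dk\binom{n-d}{i}$. $h(x)=-x\log_2x-(1-x)\log_2(1-x)$ is the binary entropy function (with $h(0)=0$). *)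

From mathcomp Require Import all_boot all_order all_algebra.
From mathcomp Require Import all_classical all_reals all_analysis.
Set Implicit Arguments. Unset Strict Implicit. Unset Printing Implicit Defensive.
Import Order.TTheory GRing.Theory Num.Theory.
Local Open Scope ring_scope.

(* Vectors of Z_2^n are modelled as boolean vectors {ffun 'I_n -> bool}. *)
Definition hamming (n : nat) (x y : {ffun 'I_n -> bool}) : nat :=
  #|[set i | x i != y i]|.

Definition hball (n eps : nat) (t : {ffun 'I_n -> bool}) : {set {ffun 'I_n -> bool}} :=
  [set y | (hamming t y <= eps)%N].

Definition Iball (R : realType) (n eps : nat) (u v : {ffun 'I_n -> bool}) : R :=
  #|hball eps u :&: hball eps v|%:R / (2 ^+ n).

Definition log2 (R : realType) (x : R) : R := ln x / ln 2.

(* binary entropy; h 0 = 0 since 0 * _ = 0 *)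
Definition bentropy (R : realType) (x : R) : R :=
  - x * log2 x - (1 - x) * log2 (1 - x).

(* Let A(y) be the set of coordinates where u and v agree but y does not.
   Since d(u,y) + d(v,y) = 2|A(y)| + d, every y in both balls has
   |A(y)| <= m := eps - ceil(d/2).  Weighting y by q^|A(y)| (1-q)^(n-d-|A(y)|),
   i.e. by q or 1-q on each coordinate where u and v agree and by 1 elsewhere,
   gives total weight 2^d; for q = m/n <= 1/2 each y in the intersection
   weighs at least q^m (1-q)^(n-m) = 2^(-n h(q)).  The second inequality is
   the tangent-line bound for the concave h at p = eps/n, whose slope is
   log2((1-p)/p), taken at distance p - q = ceil(d/2)/n. *)
From mathcomp Require Import all_boot all_order all_algebra.
From mathcomp Require Import all_classical all_reals all_analysis.
From mathcomp Require Import lra zify ring.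
Import Order.TTheory GRing.Theory Num.Theory.
Local Open Scope ring_scope.

Lemma card_set_sum (T : finType) (P : pred T) :
  #|[set i | P i]| = (\sum_i (P i : nat))%N.
Proof.
by rewrite -sum1_card big_mkcond /=; apply: eq_bigr => i _; rewrite inE; case: (P i).
Qed.

Section HammingBalls.
Local Set Implicit Arguments.
Local Unset Strict Implicit.
Variables (n : nat) (u v : {ffun 'I_n -> bool}).

Definition agree_flips (y : {ffun 'I_n -> bool}) : {set 'I_n} :=
  [set i | (u i == v i) && (y i != u i)].

Lemma hammingD_agree_flips y :
  (hamming u y + hamming v y = 2 * #|agree_flips y| + hamming u v)%N.
Proof.
rewrite /hamming /agree_flips !card_set_sum big_distrr -!big_split /=.
by apply: eq_bigr => i _; case: (u i); case: (v i); case: (y i).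
Qed.

Lemma card_agree_flips_hballI eps y :
  y \in hball eps u :&: hball eps v ->
  (#|agree_flips y| <= eps - uphalf (hamming u v))%N.
Proof.
rewrite !inE => /andP[yu yv].
have := hammingD_agree_flips y; have := odd_double_half (hamming u v).
by rewrite uphalf_half; case: (odd _) => /=; lia.
Qed.

Variables (R : realType) (q : R).

Definition coord_weight (i : 'I_n) (b : bool) : R :=
  if u i != v i then 1 else if b != u i then q else 1 - q.

Definition flip_weight (y : {ffun 'I_n -> bool}) : R := \prod_i coord_weight i (y i).

Lemma sum_flip_weight : \sum_y flip_weight y = 2 ^+ hamming u v.
Proof.
rewrite -(bigA_distr_bigA coord_weight) /=.
rewrite (eq_bigr (fun i => if u i != v i then 2 else 1)); last first.
  move=> i _; rewrite big_bool /coord_weight.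
  by case: (u i != v i) => //; case: (u i); rewrite /= ?subrK ?subrKC.
rewrite -big_mkcond prodr_const /=; congr (_ ^+ _).
by apply: eq_card => i; rewrite inE.
Qed.

Hypotheses (q_ge0 : 0 <= q) (q_le1Bq : q <= 1 - q).
Let oneBq_ge0 : 0 <= 1 - q := le_trans q_ge0 q_le1Bq.

Lemma flip_weight_ge0 y : 0 <= flip_weight y.
Proof.
apply: prodr_ge0 => i _; rewrite /coord_weight.
by case: ifP => _; [exact: ler01 | case: ifP].
Qed.

Lemma flip_weight_ge m y : (#|agree_flips y| <= m <= n)%N ->
  q ^+ m * (1 - q) ^+ (n - m) <= flip_weight y.
Proof.
move=> /andP[Am mn]; set A := agree_flips y in Am *.
rewrite /flip_weight (bigID (mem A)) /=.
rewrite (eq_bigr (fun _ => q)); last first.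
  by move=> i; rewrite inE /coord_weight => /andP[-> ->].
rewrite prodr_const.
have out_A : (1 - q) ^+ (n - #|A|) <= \prod_(i | i \notin A) coord_weight i (y i).
  have -> : (n - #|A| = #|~: A|)%N by rewrite -[n in (n - _)%N]card_ord -(cardsC A) addKn.
  rewrite -prodr_const.
  rewrite (eq_bigl (fun i => i \notin A)) => [|i]; last by rewrite !inE.
  apply: ler_prod => i; rewrite inE negb_and negbK /coord_weight => /orP[].
    by move=> ->; rewrite oneBq_ge0 gerBl.
  by move=> /eqP->; rewrite eqxx /= oneBq_ge0; case: ifP => _ /=; rewrite ?gerBl.
apply: le_trans (ler_wpM2l (exprn_ge0 _ q_ge0) out_A).
have -> : (n - #|A| = (m - #|A|) + (n - m))%N by lia.
rewrite -{1}(subnKC Am) !exprD -!mulrA ler_wpM2l ?exprn_ge0 // ler_wpM2r ?exprn_ge0 //.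
by rewrite lerXn2r ?nnegrE.
Qed.

Lemma card_mul_min_flip_weight_le (S : {set {ffun 'I_n -> bool}}) m :
  (m <= n)%N -> {in S, forall y, #|agree_flips y| <= m}%N ->
  #|S|%:R * (q ^+ m * (1 - q) ^+ (n - m)) <= 2 ^+ hamming u v.
Proof.
move=> mn SA; rewrite -sum_flip_weight mulr_natl -sumr_const.
rewrite [leRHS](bigID (mem S)) /=.
apply: le_trans (_ : _ <= \sum_(y in S) flip_weight y) _.
  by apply: ler_sum => y Sy; apply: flip_weight_ge; rewrite SA.
by rewrite lerDl sumr_ge0 // => y _; apply: flip_weight_ge0.
Qed.

End HammingBalls.

Section EntropyBounds.
Local Set Implicit Arguments.
Local Unset Strict Implicit.
Context {R : realType}.

Lemma powR2_expR (x : R) : powR 2 x = expR (x * ln 2).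
Proof. by rewrite /powR pnatr_eq0. Qed.

Lemma expR_natmul_ln (k : nat) (x : R) : (k = 0%N \/ 0 < x) ->
  expR (k%:R * ln x) = x ^+ k.
Proof.
case=> [->|x_gt0]; first by rewrite mul0r expR0 expr0.
by rewrite mulr_natl -lnXn // lnK // posrE exprn_gt0.
Qed.

Lemma bentropy_ln (x : R) :
  bentropy x * ln 2 = - x * ln x - (1 - x) * ln (1 - x).
Proof.
have ln2_neq0 : ln (2 : R) != 0 by rewrite gt_eqF // ln_gt0 // ltr1n.
by rewrite /bentropy /log2 mulrBl -!mulrA !mulVf // !mulr1.
Qed.

Lemma powR2_natmul_log2 (k : nat) (x : R) : 0 < x ->
  powR 2 (k%:R * log2 x) = x ^+ k.
Proof.
move=> x_gt0; have ln2_neq0 : ln (2 : R) != 0 by rewrite gt_eqF // ln_gt0 // ltr1n.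
by rewrite powR2_expR /log2 mulrA divfK // expR_natmul_ln //; right.
Qed.

Lemma powR2_natmul_bentropy (m n : nat) : (0 < n)%N -> (m <= n)%N ->
  let q : R := m%:R / n%:R in
  powR 2 (n%:R * bentropy q) = (q ^+ m * (1 - q) ^+ (n - m))^-1.
Proof.
move=> n_gt0 mn q; have n_neq0 : n%:R != 0 :> R by rewrite pnatr_eq0 -lt0n.
have nq : n%:R * q = m%:R by rewrite mulrC divfK.
have nq1 : n%:R * (1 - q) = (n - m)%:R by rewrite natrB // mulrBr mulr1 nq.
rewrite powR2_expR.
have -> : n%:R * bentropy q * ln 2 = - (m%:R * ln q + (n - m)%:R * ln (1 - q)).
  by rewrite -mulrA bentropy_ln -nq1 -nq; ring.
rewrite expRN expRD !expR_natmul_ln //.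
  have [->|m_lt_n] := eqVneq m n; [by left; rewrite subnn | right].
  by rewrite subr_gt0 ltr_pdivrMr ?ltr0n // mul1r ltr_nat ltn_neqAle m_lt_n.
have [->|m_gt0] := posnP m; [by left | right].
by rewrite divr_gt0 ?ltr0n.
Qed.

Lemma mul_lnB_le (a b : R) : 0 <= a -> 0 < b -> a * ln b - a * ln a <= b - a.
Proof.
move=> a_ge0 b_gt0; have [->|a_neq0] := eqVneq a 0.
  by rewrite !mul0r subrr subr0 ltW.
have a_gt0 : 0 < a by rewrite lt_def a_neq0.
have -> : b - a = a * (b / a - 1) by rewrite mulrBr mulr1 mulrCA divff ?mulr1.
rewrite -mulrBr -ln_div ?posrE // ler_wpM2l //; have := @le_ln1Dx R (b / a - 1).
by rewrite addrCA subrr addr0; apply; rewrite ltrBrDl subrr divr_gt0.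
Qed.

Lemma bentropy_le_tangent (p q : R) : 0 <= q <= 1 -> 0 < p < 1 ->
  bentropy q <= bentropy p + (p - q) * log2 (p / (1 - p)).
Proof.
move=> /andP[q_ge0 q_le1] /andP[p_gt0 p_lt1].
have ln2_gt0 : 0 < ln (2 : R) by rewrite ln_gt0 // ltr1n.
rewrite -(ler_pM2r ln2_gt0) [leRHS]mulrDl !bentropy_ln /log2 -mulrA divfK ?gt_eqF //.
rewrite ln_div ?posrE ?subr_gt0 //.
have := mul_lnB_le q_ge0 p_gt0.
have := @mul_lnB_le (1 - q) (1 - p); rewrite subr_ge0 subr_gt0 => /(_ q_le1 p_lt1).
lra.
Qed.

Lemma powR2_natmul_sub1_add (n d : nat) (h : R) :
  powR 2 (n%:R * (h - 1) + d%:R) = powR 2 (n%:R * h) * 2 ^+ d / 2 ^+ n.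
Proof.
rewrite mulrBr mulr1 powRD ?pnatr_eq0 ?implybT // powRB ?pnatr_eq0 ?implybT //.
by rewrite !powR_mulrn // mulrAC.
Qed.

Lemma powR2_bentropy_tangent (n c d : nat) (p q : R) :
  0 <= q -> q <= p -> 0 < p < 1 -> c%:R = n%:R * (p - q) ->
  powR 2 (n%:R * (bentropy q - 1) + d%:R)
    <= powR 2 (n%:R * (bentropy p - 1) + d%:R) * (p / (1 - p)) ^+ c.
Proof.
move=> q_ge0 q_le_p p01 nc; have /andP[p_gt0 p_lt1] := p01.
have q01 : 0 <= q <= 1 by rewrite q_ge0; lra.
have ratio_gt0 : 0 < p / (1 - p) by apply: divr_gt0; lra.
rewrite -powR2_natmul_log2 // -powRD ?pnatr_eq0 ?implybT // ler_powR ?ler1n // nc.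
have := ler_wpM2l (ler0n _ n) (bentropy_le_tangent q01 p01).
lra.
Qed.

Lemma Iball_le_powR2_bentropy (n eps m : nat) (u v : {ffun 'I_n -> bool}) :
  (0 < n)%N -> let q : R := m%:R / n%:R in q <= 1 - q ->
  {in hball eps u :&: hball eps v, forall y, #|agree_flips u v y| <= m}%N ->
  Iball R eps u v <= powR 2 (n%:R * (bentropy q - 1) + (hamming u v)%:R).
Proof.
move=> n_gt0 q q_le1Bq flips_le_m.
have n_gt0R : 0 < n%:R :> R by rewrite ltr0n.
have q_ge0 : 0 <= q by rewrite divr_ge0.
have nq : n%:R * q = m%:R by rewrite mulrC divfK ?gt_eqF.
have m_le_n : (m <= n)%N by rewrite -(ler_nat R) -nq ler_piMr ?ltW //; lra.
have K_gt0 : 0 < q ^+ m * (1 - q) ^+ (n - m).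
  by rewrite -invr_gt0 -powR2_natmul_bentropy // powR_gt0.
rewrite /Iball powR2_natmul_sub1_add powR2_natmul_bentropy //.
rewrite ler_wpM2r ?invr_ge0 ?exprn_ge0 // mulrC ler_pdivlMr //.
exact: card_mul_min_flip_weight_le.
Qed.

End EntropyBounds.

Theorem lemma4p13 (R : realType) (n eps : nat) (u v : {ffun 'I_n -> bool}) :
  (0 < n)%N ->
  (hamming u v <= 2 * eps)%N ->
  (eps%:R / n%:R : R) < 1 / 2 ->
  let d := hamming u v in
  let p : R := eps%:R / n%:R in
  Iball R eps u v
    <= powR 2 (n%:R * (bentropy ((eps%:R - (uphalf d)%:R) / n%:R) - 1) + d%:R)
  /\
  powR 2 (n%:R * (bentropy ((eps%:R - (uphalf d)%:R) / n%:R) - 1) + d%:R)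
    <= powR 2 (n%:R * (bentropy p - 1) + d%:R) * (p / (1 - p)) ^+ (uphalf d).
Proof.
move=> n_gt0 d_le_2eps p_lt_half d p; fold p in p_lt_half.
set c := uphalf d; set m := (eps - c)%N.
have c_le_eps : (c <= eps)%N by rewrite leq_uphalf_double -mul2n.
have -> : eps%:R - c%:R = m%:R :> R by rewrite natrB.
set q : R := m%:R / n%:R.
have n_gt0R : 0 < n%:R :> R by rewrite ltr0n.
have q_ge0 : 0 <= q by rewrite divr_ge0.
have q_le_p : q <= p by rewrite ler_pM2r ?invr_gt0 // ler_nat leq_subr.
have q_le1Bq : q <= 1 - q by lra.
split.
  apply: (Iball_le_powR2_bentropy n_gt0 q_le1Bq).
  by move=> y /card_agree_flips_hballI.
have [c0|c_gt0] := posnP c; first by rewrite /q /m c0 subn0 expr0 mulr1.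
have p_gt0 : 0 < p by rewrite divr_gt0 // ltr0n (leq_trans c_gt0).
apply: powR2_bentropy_tangent => //; first by rewrite p_gt0; lra.
by rewrite mulrBr !(mulrC n%:R) !divfK ?gt_eqF // -natrB ?leq_subr // subKn.
Qed.
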